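(* Let $\mathbb C$ be a pointed normal Mal'tsev category with finite limits and finite colimits, and let $w\colon W\to A$, $x\colon X\to A$, $y\colon Y\to A$ be morphisms. Then the following are equivalent: (a) $[(X,x),(Y,y)]_{(W,w)}=0$; (b) there exists a unique internal multiplication $X\times Y\to A$ over $(W,w)$.
   Context: A Mal'tsev category is a finitely complete category in which every reflexive relation is an equivalence relation; a normal category is a regular pointed category in which every regular epimorphism is a normal epimorphism. Notation: $\iota_i$ coproduct injections, $[a,b]$, $[a,b,c]$ copairings, $\langle a,b\rangle$ pairing, $1$, $0$ identity and zero morphisms. $(W+X)\times_W(W+Y)$ is the pullback of $[1,0]\colon W+X\to W$ and $[1,0]\colon W+Y\to W$. An internal multiplication $X\times Y\to A$ over $(W,w)$ is a morphism $m\colon (W+X)\times_W(W+Y)\to A$ with $m\langle 1,\iota_1[1,0]\rangle=[w,x]$ and $m\langle \iota_1[1,0],1\rangle=[w,y]$. The $(W,w)$-weighted subobject commutator $[(X,x),(Y,y)]_{(W,w)}\to A$ is the image (in the (regular epi, mono) factorization, equivalently (extremal epi, mono)) under $[w,x,y]\colon W+X+Y\to A$ of the kernel of $\langle [\iota_1,\iota_2,0],[\iota_1,0,\iota_2]\rangle\colon W+X+Y\to (W+X)\times_W(W+Y)$; writing it $=0$ means it is the zero subobject. *)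

Record Category := {
  Ob :> Type;
  Hom : Ob -> Ob -> Type;
  idm : forall A, Hom A A;
  comp : forall A B C, Hom B C -> Hom A B -> Hom A C;
  comp_idl : forall A B (f : Hom A B), comp A B B (idm B) f = f;
  comp_idr : forall A B (f : Hom A B), comp A A B f (idm A) = f;
  comp_assoc : forall A B C D (f : Hom A B) (g : Hom B C) (h : Hom C D),
      comp A C D h (comp A B C g f) = comp A B D (comp B C D h g) f
}.

Arguments Hom {c} _ _.
Arguments idm {c} A.
Arguments comp {c A B C} _ _.

Declare Scope cat_scope.
Open Scope cat_scope.
Notation "g ∘ f" := (comp g f) (at level 40, left associativity) : cat_scope.

Section Basic.
Context {C : Category}.

Definition mono {A B : C} (f : Hom A B) : Prop :=
  forall T (g h : Hom T A), f ∘ g = f ∘ h -> g = h.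

Definition is_terminal (T : C) : Prop := forall A : C, exists! f : Hom A T, True.
Definition is_initial (I : C) : Prop := forall A : C, exists! f : Hom I A, True.
Definition is_zero_object (Z : C) : Prop := is_initial Z /\ is_terminal Z.

Definition is_zero_mor {A B : C} (f : Hom A B) : Prop :=
  exists (Z : C) (u : Hom A Z) (v : Hom Z B), is_zero_object Z /\ f = v ∘ u.

Definition is_pullback {A B D : C} (f : Hom A D) (g : Hom B D)
    (P : C) (p1 : Hom P A) (p2 : Hom P B) : Prop :=
  f ∘ p1 = g ∘ p2 /\
  forall (T : C) (a : Hom T A) (b : Hom T B), f ∘ a = g ∘ b ->
    exists! h : Hom T P, p1 ∘ h = a /\ p2 ∘ h = b.

Definition is_pushout {D A B : C} (f : Hom D A) (g : Hom D B)
    (Q : C) (q1 : Hom A Q) (q2 : Hom B Q) : Prop :=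
  q1 ∘ f = q2 ∘ g /\
  forall (T : C) (a : Hom A T) (b : Hom B T), a ∘ f = b ∘ g ->
    exists! h : Hom Q T, h ∘ q1 = a /\ h ∘ q2 = b.

Definition has_pullbacks : Prop :=
  forall (A B D : C) (f : Hom A D) (g : Hom B D),
    exists P (p1 : Hom P A) (p2 : Hom P B), is_pullback f g P p1 p2.

Definition has_pushouts : Prop :=
  forall (D A B : C) (f : Hom D A) (g : Hom D B),
    exists Q (q1 : Hom A Q) (q2 : Hom B Q), is_pushout f g Q q1 q2.

Definition finitely_complete : Prop := (exists T : C, is_terminal T) /\ has_pullbacks.
Definition finitely_cocomplete : Prop := (exists I : C, is_initial I) /\ has_pushouts.

Definition is_coequalizer {T X Q : C} (a b : Hom T X) (e : Hom X Q) : Prop :=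
  e ∘ a = e ∘ b /\
  forall (Z : C) (g : Hom X Z), g ∘ a = g ∘ b -> exists! h : Hom Q Z, h ∘ e = g.

Definition regular_epi {X Q : C} (e : Hom X Q) : Prop :=
  exists (T : C) (a b : Hom T X), is_coequalizer a b e.

Definition normal_epi {X Q : C} (e : Hom X Q) : Prop :=
  exists (K : C) (k : Hom K X), is_zero_mor (e ∘ k) /\
    forall (Z : C) (g : Hom X Z), is_zero_mor (g ∘ k) -> exists! h : Hom Q Z, h ∘ e = g.

Definition is_kernel {K X B : C} (f : Hom X B) (k : Hom K X) : Prop :=
  is_zero_mor (f ∘ k) /\
  forall (T : C) (g : Hom T X), is_zero_mor (f ∘ g) -> exists! h : Hom T K, k ∘ h = g.

Definition is_pointed : Prop := exists Z : C, is_zero_object Z.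

Definition is_regular : Prop :=
  finitely_complete /\
  (forall (A B : C) (f : Hom A B), exists (I : C) (e : Hom A I) (m : Hom I B),
      regular_epi e /\ mono m /\ f = m ∘ e) /\
  (forall (A B D : C) (e : Hom A D) (f : Hom B D) (P : C) (p1 : Hom P A) (p2 : Hom P B),
      regular_epi e -> is_pullback e f P p1 p2 -> regular_epi p2).

Definition is_normal : Prop :=
  is_regular /\ is_pointed /\
  forall (A B : C) (e : Hom A B), regular_epi e -> normal_epi e.

(* Internal relations on X: jointly monic spans r1, r2 : R -> X *)
Definition jointly_monic {R X : C} (r1 r2 : Hom R X) : Prop :=
  forall T (g h : Hom T R), r1 ∘ g = r1 ∘ h -> r2 ∘ g = r2 ∘ h -> g = h.

Definition rel_reflexive {R X : C} (r1 r2 : Hom R X) : Prop :=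
  exists d : Hom X R, r1 ∘ d = idm X /\ r2 ∘ d = idm X.

Definition rel_symmetric {R X : C} (r1 r2 : Hom R X) : Prop :=
  exists s : Hom R R, r1 ∘ s = r2 /\ r2 ∘ s = r1.

Definition rel_transitive {R X : C} (r1 r2 : Hom R X) : Prop :=
  forall (P : C) (p1 p2 : Hom P R), is_pullback r2 r1 P p1 p2 ->
    exists t : Hom P R, r1 ∘ t = r1 ∘ p1 /\ r2 ∘ t = r2 ∘ p2.

Definition is_maltsev : Prop :=
  finitely_complete /\
  forall (R X : C) (r1 r2 : Hom R X), jointly_monic r1 r2 ->
    rel_reflexive r1 r2 ->
    rel_reflexive r1 r2 /\ rel_symmetric r1 r2 /\ rel_transitive r1 r2.

End Basic.

Record ZeroObject (C : Category) := {
  zobj : C;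
  zobj_zero : is_zero_object zobj;
  to_z : forall A : C, Hom A zobj;
  from_z : forall A : C, Hom zobj A
}.

Arguments zobj {C} z.
Arguments to_z {C} z A.
Arguments from_z {C} z A.

Definition zmor {C : Category} (Z : ZeroObject C) (A B : C) : Hom A B :=
  from_z Z B ∘ to_z Z A.

Record Coproduct {C : Category} (A B : C) := {
  cp_obj :> C;
  inj1 : Hom A cp_obj;
  inj2 : Hom B cp_obj;
  copair : forall T : C, Hom A T -> Hom B T -> Hom cp_obj T;
  copair_inj1 : forall T (f : Hom A T) (g : Hom B T), copair T f g ∘ inj1 = f;
  copair_inj2 : forall T (f : Hom A T) (g : Hom B T), copair T f g ∘ inj2 = g;
  copair_unique : forall T (h : Hom cp_obj T), h = copair T (h ∘ inj1) (h ∘ inj2)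
}.
Arguments copair {C A B} c {T} _ _.
Arguments inj1 {C A B} c.
Arguments inj2 {C A B} c.

Record Coproduct3 {C : Category} (A B D : C) := {
  cp3_obj :> C;
  inj3_1 : Hom A cp3_obj;
  inj3_2 : Hom B cp3_obj;
  inj3_3 : Hom D cp3_obj;
  copair3 : forall T : C, Hom A T -> Hom B T -> Hom D T -> Hom cp3_obj T;
  copair3_1 : forall T f g h, copair3 T f g h ∘ inj3_1 = f;
  copair3_2 : forall T f g h, copair3 T f g h ∘ inj3_2 = g;
  copair3_3 : forall T f g h, copair3 T f g h ∘ inj3_3 = h;
  copair3_unique : forall T (k : Hom cp3_obj T),
      k = copair3 T (k ∘ inj3_1) (k ∘ inj3_2) (k ∘ inj3_3)
}.
Arguments copair3 {C A B D} c {T} _ _ _.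

(* The sections [<1, i1 [1,0]>] and [<i1 [1,0], 1>] of the pullback P are jointly
   extremal-epic in a Mal'tsev category: a subobject M of P containing both carries the
   relation "(u, v) iff <p1 u, p2 v> lies in M" on M, which is reflexive, hence symmetric,
   and symmetry applied to the pair built from the two sections puts the identity of P in M.
   Since the copairing of the two sections is phi : W+X+Y -> P, phi is a regular epi, hence
   (by normality) the cokernel of its kernel k.  Internal multiplications are exactly the
   maps mu with mu phi = [w,x,y], so one exists (uniquely) iff [w,x,y] k = 0, i.e. iff the
   image of [w,x,y] k, the weighted commutator, is zero. *)

#[local] Arguments comp_assoc {c A B C D} f g h.
#[local] Arguments comp_idl {c A B} f.
#[local] Arguments comp_idr {c A B} f.

Section Category.
Context {C : Category}.

Definition epi {A B : C} (f : Hom A B) : Prop :=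
  forall T (g h : Hom B T), g ∘ f = h ∘ f -> g = h.

Lemma terminal_hom_unique {T A : C} : is_terminal T -> forall f g : Hom A T, f = g.
Proof.
  intros HT f g. destruct (HT A) as [u [_ Hu]].
  rewrite <- (Hu f Logic.I), <- (Hu g Logic.I). reflexivity.
Qed.

Lemma initial_hom_unique {I A : C} : is_initial I -> forall f g : Hom I A, f = g.
Proof.
  intros HI f g. destruct (HI A) as [u [_ Hu]].
  rewrite <- (Hu f Logic.I), <- (Hu g Logic.I). reflexivity.
Qed.

Lemma regular_epi_epi {A B : C} (e : Hom A B) : regular_epi e -> epi e.
Proof.
  intros [T [a [b [Hab Hcoeq]]]] Z g h E.
  assert (Hga : g ∘ e ∘ a = g ∘ e ∘ b) by (rewrite <- !comp_assoc, Hab; reflexivity).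
  destruct (Hcoeq Z (g ∘ e) Hga) as [u [_ Hu]].
  rewrite <- (Hu g eq_refl), <- (Hu h (eq_sym E)). reflexivity.
Qed.

Lemma mono_split_epi_inverse {A B : C} (m : Hom A B) (r : Hom B A) :
  mono m -> m ∘ r = idm B -> r ∘ m = idm A.
Proof.
  intros Hm Hr. apply Hm. rewrite comp_assoc, Hr, comp_idl, comp_idr. reflexivity.
Qed.

Lemma regular_epi_iso_comp {A B D : C} (e : Hom A B) (m : Hom B D) (r : Hom D B) :
  m ∘ r = idm D -> r ∘ m = idm B -> regular_epi e -> regular_epi (m ∘ e).
Proof.
  intros Hmr Hrm [T [a [b [Hab Hcoeq]]]]. exists T, a, b. split.
  - rewrite <- !comp_assoc, Hab. reflexivity.
  - intros Z g Hg. destruct (Hcoeq Z g Hg) as [h [Hh Huniq]].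
    exists (h ∘ r). split.
    + rewrite <- comp_assoc, (comp_assoc e m r), Hrm, comp_idl. exact Hh.
    + intros h' Hh'. rewrite (Huniq (h' ∘ m)), <- comp_assoc, Hmr, comp_idr.
      * reflexivity.
      * rewrite <- comp_assoc. exact Hh'.
Qed.

Lemma regular_epi_of_extremal (HR : is_regular (C := C)) {A B : C} (f : Hom A B) :
  (forall M (m : Hom M B) (u : Hom A M), mono m -> f = m ∘ u ->
     exists r, m ∘ r = idm B) ->
  regular_epi f.
Proof.
  intros Hext. destruct HR as [_ [Hfact _]].
  destruct (Hfact A B f) as [M [e [m [He [Hm ->]]]]].
  destruct (Hext M m e Hm eq_refl) as [r Hr].
  exact (regular_epi_iso_comp e m r Hr (mono_split_epi_inverse m r Hm Hr) He).
Qed.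

Lemma pullback_pair {A B D P : C} {f : Hom A D} {g : Hom B D} {p1 : Hom P A}
  {p2 : Hom P B} (HP : is_pullback f g P p1 p2) {T} (a : Hom T A) (b : Hom T B) :
  f ∘ a = g ∘ b -> exists h, p1 ∘ h = a /\ p2 ∘ h = b.
Proof. intros E. destruct (proj2 HP T a b E) as [h [Hh _]]. eauto. Qed.

Lemma pullback_hom_ext {A B D P : C} {f : Hom A D} {g : Hom B D} {p1 : Hom P A}
  {p2 : Hom P B} (HP : is_pullback f g P p1 p2) {T} (h h' : Hom T P) :
  p1 ∘ h = p1 ∘ h' -> p2 ∘ h = p2 ∘ h' -> h = h'.
Proof.
  intros E1 E2.
  assert (E : f ∘ (p1 ∘ h') = g ∘ (p2 ∘ h'))
    by (rewrite !comp_assoc, (proj1 HP); reflexivity).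
  destruct (proj2 HP T _ _ E) as [u [_ Hu]].
  rewrite <- (Hu h (conj E1 E2)), <- (Hu h' (conj eq_refl eq_refl)). reflexivity.
Qed.

Lemma copair_comp {A B : C} (c : Coproduct A B) {T T'} (f : Hom A T) (g : Hom B T)
  (h : Hom T T') : h ∘ copair c f g = copair c (h ∘ f) (h ∘ g).
Proof.
  rewrite (copair_unique _ _ c _ (h ∘ copair c f g)), <- !comp_assoc,
    copair_inj1, copair_inj2. reflexivity.
Qed.

Lemma copair_inj {A B : C} (c : Coproduct A B) : copair c (inj1 c) (inj2 c) = idm c.
Proof.
  rewrite (copair_unique _ _ c _ (idm c)), !comp_idl. reflexivity.
Qed.

Lemma unique_exists_iff {T : Type} (Q R : T -> Prop) :
  (forall t, Q t <-> R t) -> (exists! t, Q t) <-> (exists! t, R t).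
Proof.
  intros HQR. split; intros [t [Ht Huniq]]; exists t; split;
    try apply HQR; auto; intros t' Ht'; apply Huniq, HQR, Ht'.
Qed.

End Category.

Section ZeroMorphisms.
Context {C : Category} (Z : ZeroObject C).

Lemma zmor_comp_r {A B D : C} (f : Hom A B) : zmor Z B D ∘ f = zmor Z A D.
Proof.
  unfold zmor. rewrite <- comp_assoc. f_equal.
  apply terminal_hom_unique, zobj_zero.
Qed.

Lemma zmor_comp_l {A B D : C} (f : Hom B D) : f ∘ zmor Z A B = zmor Z A D.
Proof.
  unfold zmor. rewrite comp_assoc. f_equal.
  apply initial_hom_unique, zobj_zero.
Qed.

Lemma zmor_is_zero {A B : C} : is_zero_mor (zmor Z A B).
Proof. exists (zobj Z), (to_z Z A), (from_z Z B). split; [apply zobj_zero | reflexivity]. Qed.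

Lemma zero_mor_zmor {A B : C} (f : Hom A B) : is_zero_mor f -> f = zmor Z A B.
Proof.
  intros [Z' [u [v [[_ HT] ->]]]].
  assert (Ev : v = v ∘ from_z Z Z' ∘ to_z Z Z').
  { rewrite <- comp_assoc, (terminal_hom_unique HT (from_z Z Z' ∘ to_z Z Z') (idm Z')).
    symmetry. apply comp_idr. }
  rewrite Ev, <- comp_assoc, (initial_hom_unique (proj1 (zobj_zero _ Z))
    (v ∘ from_z Z Z') (from_z Z B)), (terminal_hom_unique (proj2 (zobj_zero _ Z))
    (to_z Z Z' ∘ u) (to_z Z A)).
  reflexivity.
Qed.

Lemma zero_object_of_zero_epi {A B : C} (e : Hom A B) :
  epi e -> e = zmor Z A B -> is_zero_object B.
Proof.
  intros He Hz.
  assert (Hid : idm B = zmor Z B B) by (apply He; rewrite comp_idl, zmor_comp_r; exact Hz).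
  split; intros T; [exists (zmor Z B T) | exists (zmor Z T B)]; split; trivial;
    intros g _.
  - rewrite <- (comp_idr g), Hid, zmor_comp_l. reflexivity.
  - rewrite <- (comp_idl g), Hid, zmor_comp_r. reflexivity.
Qed.

Lemma image_zero_iff {A B D : C} (e : Hom A B) (m : Hom B D) :
  regular_epi e -> mono m -> is_zero_object B <-> is_zero_mor (m ∘ e).
Proof.
  intros He Hm. split.
  - intros HB. exists B, e, m. auto.
  - intros Hz. apply (zero_object_of_zero_epi e (regular_epi_epi e He)).
    apply Hm. rewrite (zero_mor_zmor _ Hz), !zmor_comp_l. reflexivity.
Qed.

Lemma normal_epi_factor_iff {A B K D : C} (e : Hom A B) (k : Hom K A) (g : Hom A D) :
  normal_epi e -> is_kernel e k -> (exists! h, h ∘ e = g) <-> is_zero_mor (g ∘ k).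
Proof.
  intros [K' [k' [Hk'z Hcoker]]] [Hkz Hkuniv]. split.
  - intros [h [<- _]]. rewrite <- comp_assoc, (zero_mor_zmor _ Hkz), zmor_comp_l.
    apply zmor_is_zero.
  - intros Hgk. apply Hcoker.
    destruct (Hkuniv K' k' Hk'z) as [u [<- _]].
    rewrite comp_assoc, (zero_mor_zmor _ Hgk), zmor_comp_r. apply zmor_is_zero.
Qed.

End ZeroMorphisms.

Section MaltsevPullback.
Context {C : Category} (HM : is_maltsev (C := C)).
Context {A B D P : C} {f : Hom A B} {g : Hom D B} {s : Hom B A} (Hs : f ∘ s = idm B).
Context {p1 : Hom P A} {p2 : Hom P D} (HP : is_pullback f g P p1 p2).
Context {M : C} {m : Hom M P} (Hm : mono m).

(* The legs [a1 c2], [a2 c2] of S exhibit the relation on M of those pairs (u, v) for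
   which <p1 m u, p2 m v> is defined and lies in M. *)
Section Relation.
Context {Q : C} {a1 a2 : Hom Q M} (HQ : is_pullback (f ∘ p1 ∘ m) (f ∘ p1 ∘ m) Q a1 a2).
Context {rho : Hom Q P}
  (Hrho1 : p1 ∘ rho = p1 ∘ m ∘ a1) (Hrho2 : p2 ∘ rho = p2 ∘ m ∘ a2).
Context {S : C} {c1 : Hom S M} {c2 : Hom S Q} (HS : is_pullback m rho S c1 c2).

Lemma relation_intro {T : C} (u v z : Hom T M) :
  p1 ∘ m ∘ z = p1 ∘ m ∘ u -> p2 ∘ m ∘ z = p2 ∘ m ∘ v ->
  exists h, a1 ∘ c2 ∘ h = u /\ a2 ∘ c2 ∘ h = v.
Proof.
  intros Hz1 Hz2.
  assert (Huv : f ∘ p1 ∘ m ∘ u = f ∘ p1 ∘ m ∘ v).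
  { transitivity (f ∘ (p1 ∘ m ∘ z)); [rewrite Hz1, !comp_assoc; reflexivity |].
    transitivity (g ∘ (p2 ∘ m ∘ z)); [rewrite !comp_assoc, (proj1 HP); reflexivity |].
    rewrite Hz2, !comp_assoc, (proj1 HP). reflexivity. }
  destruct (pullback_pair HQ u v Huv) as [t [Ht1 Ht2]].
  assert (Hzt : m ∘ z = rho ∘ t).
  { apply (pullback_hom_ext HP).
    - rewrite comp_assoc, Hz1, (comp_assoc t), Hrho1, <- (comp_assoc t a1), Ht1. reflexivity.
    - rewrite comp_assoc, Hz2, (comp_assoc t), Hrho2, <- (comp_assoc t a2), Ht2. reflexivity. }
  destruct (pullback_pair HS z t Hzt) as [h [_ Hh]].
  exists h. rewrite <- !comp_assoc, Hh. auto.
Qed.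

Lemma relation_elim {T : C} (h : Hom T S) :
  exists z, p1 ∘ m ∘ z = p1 ∘ m ∘ (a1 ∘ c2 ∘ h) /\
            p2 ∘ m ∘ z = p2 ∘ m ∘ (a2 ∘ c2 ∘ h).
Proof.
  exists (c1 ∘ h).
  rewrite <- !comp_assoc, (comp_assoc h c1 m), (proj1 HS), !comp_assoc, Hrho1, Hrho2.
  split; reflexivity.
Qed.

Lemma relation_jointly_monic : jointly_monic (a1 ∘ c2) (a2 ∘ c2).
Proof.
  intros T h h' E1 E2.
  assert (Hc2 : c2 ∘ h = c2 ∘ h')
    by (apply (pullback_hom_ext HQ); rewrite !comp_assoc; assumption).
  apply (pullback_hom_ext HS); [apply Hm |];
    rewrite ?comp_assoc, ?(proj1 HS), <- ?comp_assoc, Hc2; reflexivity.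
Qed.

Lemma relation_reflexive : rel_reflexive (a1 ∘ c2) (a2 ∘ c2).
Proof.
  destruct (pullback_pair HQ (idm M) (idm M) eq_refl) as [delta [Hd1 Hd2]].
  assert (Hdiag : m ∘ idm M = rho ∘ delta).
  { rewrite comp_idr. apply (pullback_hom_ext HP).
    - rewrite (comp_assoc delta), Hrho1, <- (comp_assoc delta a1), Hd1, comp_idr.
      reflexivity.
    - rewrite (comp_assoc delta), Hrho2, <- (comp_assoc delta a2), Hd2, comp_idr.
      reflexivity. }
  destruct (pullback_pair HS (idm M) delta Hdiag) as [d [_ Hd]].
  exists d. rewrite <- !comp_assoc, Hd, Hd1, Hd2. split; reflexivity.
Qed.

Lemma relation_swap {T : C} (h : Hom T S) :
  exists h', a1 ∘ c2 ∘ h' = a2 ∘ c2 ∘ h /\ a2 ∘ c2 ∘ h' = a1 ∘ c2 ∘ h.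
Proof.
  destruct (proj2 HM S M _ _ relation_jointly_monic relation_reflexive)
    as [_ [[sigma [Hs1 Hs2]] _]].
  exists (sigma ∘ h). rewrite !comp_assoc, Hs1, Hs2. split; reflexivity.
Qed.

End Relation.

Lemma pullback_sections_extremal {t : Hom B D} (u1 : Hom A M) (u2 : Hom D M) :
  p1 ∘ m ∘ u1 = idm A -> p2 ∘ m ∘ u1 = t ∘ f ->
  p1 ∘ m ∘ u2 = s ∘ g -> p2 ∘ m ∘ u2 = idm D ->
  exists r, m ∘ r = idm P.
Proof.
  intros H11 H12 H21 H22.
  destruct (proj2 (proj1 HM) _ _ _ (f ∘ p1 ∘ m) (f ∘ p1 ∘ m)) as [Q [a1 [a2 HQ]]].
  assert (Hrho : f ∘ (p1 ∘ m ∘ a1) = g ∘ (p2 ∘ m ∘ a2))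
    by (rewrite !comp_assoc, (proj1 HQ), <- (proj1 HP); reflexivity).
  destruct (pullback_pair HP _ _ Hrho) as [rho [Hrho1 Hrho2]].
  destruct (proj2 (proj1 HM) _ _ _ m rho) as [S [c1 [c2 HS]]].
  (* (u2 p2, u1 p1) is related, witnessed by u1 s f p1; by symmetry so is
     (u1 p1, u2 p2), whose witness is a right inverse of m. *)
  destruct (relation_intro HQ Hrho1 Hrho2 HS (u2 ∘ p2) (u1 ∘ p1) (u1 ∘ s ∘ f ∘ p1))
    as [h [Hh1 Hh2]].
  - rewrite !comp_assoc, H11, H21, comp_idl, <- !comp_assoc, (proj1 HP). reflexivity.
  - rewrite !comp_assoc, H12, <- (comp_assoc s f t), Hs, comp_idr. reflexivity.
  - destruct (relation_swap HQ Hrho1 Hrho2 HS h) as [h' [Hh1' Hh2']].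
    destruct (relation_elim Hrho1 Hrho2 HS h') as [z [Hz1 Hz2]].
    exists z. apply (pullback_hom_ext HP).
    + rewrite comp_assoc, Hz1, Hh1', Hh2, !comp_assoc, H11, comp_idl, comp_idr.
      reflexivity.
    + rewrite comp_assoc, Hz2, Hh2', Hh1, !comp_assoc, H22, comp_idl, comp_idr.
      reflexivity.
Qed.

End MaltsevPullback.

Definition internal_multiplication {C : Category} (Z : ZeroObject C) {W X Y A : C}
  {WX : Coproduct W X} {WY : Coproduct W Y} {P : C} (p1 : Hom P WX) (p2 : Hom P WY)
  (w : Hom W A) (x : Hom X A) (y : Hom Y A) (mu : Hom P A) : Prop :=
  (forall h : Hom WX P,
      p1 ∘ h = idm WX /\ p2 ∘ h = inj1 WY ∘ copair WX (idm W) (zmor Z X W) ->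
      mu ∘ h = copair WX w x) /\
  (forall h : Hom WY P,
      p1 ∘ h = inj1 WX ∘ copair WY (idm W) (zmor Z Y W) /\ p2 ∘ h = idm WY ->
      mu ∘ h = copair WY w y).

Section WeightedCommutator.
Context {C : Category} (Z : ZeroObject C) {W X Y : C}.
Context {WX : Coproduct W X} {WY : Coproduct W Y} {WXY : Coproduct3 W X Y}.

Local Notation fX := (copair WX (idm W) (zmor Z X W)).
Local Notation fY := (copair WY (idm W) (zmor Z Y W)).
Local Notation jX := (copair WX (inj3_1 _ _ _ WXY) (inj3_2 _ _ _ WXY)).
Local Notation jY := (copair WY (inj3_1 _ _ _ WXY) (inj3_3 _ _ _ WXY)).

Context {P : C} {p1 : Hom P WX} {p2 : Hom P WY} (HP : is_pullback fX fY P p1 p2).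
Context {phi : Hom WXY P}
  (Hphi1 : p1 ∘ phi = copair3 WXY (inj1 WX) (inj2 WX) (zmor Z Y WX))
  (Hphi2 : p2 ∘ phi = copair3 WXY (inj1 WY) (zmor Z X WY) (inj2 WY)).

Lemma phi_section_X : p1 ∘ (phi ∘ jX) = idm WX /\ p2 ∘ (phi ∘ jX) = inj1 WY ∘ fX.
Proof.
  rewrite !comp_assoc, Hphi1, Hphi2, !copair_comp, !copair3_1, !copair3_2, comp_idr,
    zmor_comp_l, copair_inj.
  split; reflexivity.
Qed.

Lemma phi_section_Y : p1 ∘ (phi ∘ jY) = inj1 WX ∘ fY /\ p2 ∘ (phi ∘ jY) = idm WY.
Proof.
  rewrite !comp_assoc, Hphi1, Hphi2, !copair_comp, !copair3_1, !copair3_3, comp_idr,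
    zmor_comp_l, copair_inj.
  split; reflexivity.
Qed.

Lemma internal_multiplication_iff {A : C} (w : Hom W A) (x : Hom X A) (y : Hom Y A)
  (mu : Hom P A) :
  internal_multiplication Z p1 p2 w x y mu <-> mu ∘ phi = copair3 WXY w x y.
Proof.
  destruct phi_section_X as [HX1 HX2], phi_section_Y as [HY1 HY2].
  split.
  - intros [HmuX HmuY].
    specialize (HmuX _ (conj HX1 HX2)). specialize (HmuY _ (conj HY1 HY2)).
    rewrite (copair3_unique _ _ _ WXY _ (mu ∘ phi)). f_equal.
    + rewrite <- (copair_inj1 _ _ WX _ w x), <- HmuX, <- !comp_assoc, copair_inj1.
      reflexivity.
    + rewrite <- (copair_inj2 _ _ WX _ w x), <- HmuX, <- !comp_assoc, copair_inj2.
      reflexivity.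
    + rewrite <- (copair_inj2 _ _ WY _ w y), <- HmuY, <- !comp_assoc, copair_inj2.
      reflexivity.
  - intros Hmu. split; intros h [H1 H2].
    + rewrite (pullback_hom_ext HP h (phi ∘ jX)) by congruence.
      rewrite comp_assoc, Hmu, copair_comp, copair3_1, copair3_2. reflexivity.
    + rewrite (pullback_hom_ext HP h (phi ∘ jY)) by congruence.
      rewrite comp_assoc, Hmu, copair_comp, copair3_1, copair3_3. reflexivity.
Qed.

Lemma phi_regular_epi : is_regular (C := C) -> is_maltsev (C := C) -> regular_epi phi.
Proof.
  intros HR HM. apply (regular_epi_of_extremal HR). intros M m u Hm Hu.
  destruct phi_section_X as [HX1 HX2], phi_section_Y as [HY1 HY2].
  apply (pullback_sections_extremal HM (copair_inj1 _ _ WX _ _ _) HP Hm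
           (t := inj1 WY) (u ∘ jX) (u ∘ jY));
    rewrite <- !comp_assoc, (comp_assoc _ u m), <- Hu; assumption.
Qed.

End WeightedCommutator.

Theorem theorem2p5 (C : Category) (Z : ZeroObject C)
  (HN : is_normal (C := C)) (HM : is_maltsev (C := C))
  (HL : finitely_complete (C := C)) (HCL : finitely_cocomplete (C := C))
  (W X Y A : C) (w : Hom W A) (x : Hom X A) (y : Hom Y A)
  (WX : Coproduct W X) (WY : Coproduct W Y) (WXY : Coproduct3 W X Y)
  (* P = (W+X) x_W (W+Y), pullback of [1,0] and [1,0] *)
  (P : C) (p1 : Hom P WX) (p2 : Hom P WY)
  (HP : is_pullback (copair WX (idm W) (zmor Z X W))
                    (copair WY (idm W) (zmor Z Y W)) P p1 p2)
  (* phi = < [i1,i2,0], [i1,0,i2] > : W+X+Y -> P *)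
  (phi : Hom WXY P)
  (Hphi1 : p1 ∘ phi = copair3 WXY (inj1 WX) (inj2 WX) (zmor Z Y WX))
  (Hphi2 : p2 ∘ phi = copair3 WXY (inj1 WY) (zmor Z X WY) (inj2 WY))
  (* k : K -> W+X+Y a kernel of phi *)
  (K : C) (k : Hom K WXY) (Hk : is_kernel phi k)
  (* (regular epi, mono) factorization of [w,x,y] o k; m is the commutator *)
  (I : C) (e : Hom K I) (m : Hom I A)
  (He : regular_epi e) (Hm : mono m)
  (Hfact : copair3 WXY w x y ∘ k = m ∘ e) :
  is_zero_object I <->
  exists! mu : Hom P A,
    (forall h : Hom WX P,
        p1 ∘ h = idm WX /\ p2 ∘ h = inj1 WY ∘ copair WX (idm W) (zmor Z X W) ->
        mu ∘ h = copair WX w x) /\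
    (forall h : Hom WY P,
        p1 ∘ h = inj1 WX ∘ copair WY (idm W) (zmor Z Y W) /\ p2 ∘ h = idm WY ->
        mu ∘ h = copair WY w y).
Proof.
  destruct HN as (HR & _ & Hnormal).
  pose proof (phi_regular_epi Z HP Hphi1 Hphi2 HR HM) as Hphi.
  apply (iff_trans (image_zero_iff Z e m He Hm)). rewrite <- Hfact.
  apply (iff_trans (iff_sym (normal_epi_factor_iff Z phi k _ (Hnormal _ _ _ Hphi) Hk))).
  apply unique_exists_iff. intros mu. apply iff_sym.
  exact (internal_multiplication_iff Z HP Hphi1 Hphi2 w x y mu).
Qed.
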